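(* Let $H,H^{(p)}$ ($p\in\mathbb N$) be coding functions and let $r,r_p\in(0,\infty)$ with $r<\Gamma(H)$ and $r_p<\Gamma(H^{(p)})$ for each $p$. Assume: (i) $\{s\ge0:H_s=\Gamma(H)\}=\{S(H)\}$; (ii) $H_s>\Gamma(H)-r$ for all $s\in(\sigma^-_r(H),\sigma^+_r(H))$; (iii) $H^{(p)}\to H$ uniformly on compacts, $\zeta(H^{(p)})\to\zeta(H)$ and $r_p\to r$. Then $S(H^{(p)})\to S(H)$, $\sigma^-_{r_p}(H^{(p)})\to\sigma^-_r(H)$, $\sigma^+_{r_p}(H^{(p)})\to\sigma^+_r(H)$; moreover $\Theta_{r_p}(H^{(p)})\to\Theta_r(H)$ uniformly on compacts and $\zeta(\Theta_{r_p}(H^{(p)}))\to\zeta(\Theta_r(H))$.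
   Context: A coding function is a continuous $H:\mathbb R_+\to\mathbb R_+$ with compact support, $H_0=0$, not identically zero. $\zeta(H)=\sup\{t:H_t>0\}$, $\Gamma(H)=\sup H$, $S(H)=\inf\{t\ge0:H_t=\Gamma(H)\}$. For $r\in(0,\Gamma(H))$: $\sigma^-_r(H)=\sup\{t\in[0,S(H)]:H_t<\Gamma(H)-r\}$, $\sigma^+_r(H)=\inf\{t\ge S(H):H_t<\Gamma(H)-r\}$, and $\Theta_r(H)(t)=H\big((\sigma^-_r(H)+t)\wedge\sigma^+_r(H)\big)-\Gamma(H)+r$ for $t\ge0$. *)

From Stdlib Require Import Reals Lra.
From Coquelicot Require Import Coquelicot.
Open Scope R_scope.

(* A coding function H : R_+ -> R_+ is represented by a function R -> R of which
   only the values on [0, +oo) matter. *)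
Definition coding_function (H : R -> R) : Prop :=
  (forall t, 0 <= t -> forall eps, 0 < eps -> exists delta, 0 < delta /\
      forall s, 0 <= s -> Rabs (s - t) < delta -> Rabs (H s - H t) < eps) /\
  (forall t, 0 <= t -> 0 <= H t) /\
  (exists M, forall t, M <= t -> H t = 0) /\
  H 0 = 0 /\
  (exists t, 0 <= t /\ H t <> 0).

Definition zeta (H : R -> R) : R := real (Lub_Rbar (fun t => 0 <= t /\ 0 < H t)).

Definition Gamma (H : R -> R) : R :=
  real (Lub_Rbar (fun y => exists t, 0 <= t /\ y = H t)).

Definition S (H : R -> R) : R :=
  real (Glb_Rbar (fun t => 0 <= t /\ H t = Gamma H)).

Definition sigma_minus (r : R) (H : R -> R) : R :=
  real (Lub_Rbar (fun t => 0 <= t /\ t <= S H /\ H t < Gamma H - r)).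

Definition sigma_plus (r : R) (H : R -> R) : R :=
  real (Glb_Rbar (fun t => S H <= t /\ H t < Gamma H - r)).

Definition Theta (r : R) (H : R -> R) : R -> R :=
  fun t => H (Rmin (sigma_minus r H + t) (sigma_plus r H)) - Gamma H + r.

Definition ucc (F : nat -> R -> R) (G : R -> R) : Prop :=
  forall K, 0 <= K -> forall eps, 0 < eps -> exists N : nat, forall p : nat, (N <= p)%nat ->
    forall t, 0 <= t <= K -> Rabs (F p t - G t) < eps.

From Stdlib Require Import Reals Lra Lia Classical.
From Coquelicot Require Import Coquelicot.
Open Scope R_scope.

(* All supports eventually lie in [0, zeta H + 1], where the convergence is
   uniform, so maxima converge: Gamma(H^(p)) -> Gamma(H).  By (i) and
   compactness, H stays a margin below Gamma(H) away from S(H), so every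
   maximiser of H^(p) is eventually close to S(H).  By (ii), H exceeds
   Gamma(H) - r by a margin on every compact subinterval of the excursion
   (sigma^-, sigma^+), while the points just outside it where H < Gamma(H) - r
   keep that property for H^(p); this traps sigma^-_{r_p} and sigma^+_{r_p}.
   Theta then converges by uniform continuity of H, and zeta(Theta_r(H)) is the
   excursion length because Theta_r(H) is positive exactly on (0, sigma^+ - sigma^-). *)

Section BoundedLub.
Variables (E : R -> Prop) (x0 M : R).
Hypotheses (E_x0 : E x0) (E_ub : forall x, E x -> x <= M).

Lemma is_lub_Rbar_real : is_lub_Rbar E (real (Lub_Rbar E)).
Proof.
generalize (Lub_Rbar_correct E).
destruct (Lub_Rbar E) as [l| |]; intros [ub least]; simpl.
- now split.
- exfalso; apply (least (Finite M)); intros x Ex; exact (E_ub x Ex).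
- exfalso; exact (ub x0 E_x0).
Qed.

Lemma real_Lub_Rbar_ub x : E x -> x <= real (Lub_Rbar E).
Proof. exact (proj1 is_lub_Rbar_real x). Qed.

Lemma real_Lub_Rbar_le m : (forall x, E x -> x <= m) -> real (Lub_Rbar E) <= m.
Proof. intros Em; apply (proj2 is_lub_Rbar_real (Finite m)); exact Em. Qed.

Lemma real_Lub_Rbar_approx e : 0 < e -> exists x, E x /\ real (Lub_Rbar E) - e < x.
Proof.
intros he; apply NNPP; intros Hno.
enough (real (Lub_Rbar E) <= real (Lub_Rbar E) - e) by lra.
apply real_Lub_Rbar_le; intros x Ex.
apply Rnot_lt_le; intros hx; apply Hno; now exists x.
Qed.

End BoundedLub.

(* [real m_infty = 0] is the value on the empty set, hence the hypothesis [0 <= m]. *)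
Lemma real_Lub_Rbar_le_nonneg (E : R -> Prop) (m : R) :
  (forall x, E x -> x <= m) -> 0 <= m -> real (Lub_Rbar E) <= m.
Proof.
intros Em m0; generalize (Lub_Rbar_correct E).
destruct (Lub_Rbar E) as [l| |]; intros [_ least]; simpl; auto.
apply (least (Finite m)); exact Em.
Qed.

Section BoundedGlb.
Variables (E : R -> Prop) (x0 m : R).
Hypotheses (E_x0 : E x0) (E_lb : forall x, E x -> m <= x).

Lemma is_glb_Rbar_real : is_glb_Rbar E (real (Glb_Rbar E)).
Proof.
generalize (Glb_Rbar_correct E).
destruct (Glb_Rbar E) as [l| |]; intros [lb greatest]; simpl.
- now split.
- exfalso; exact (lb x0 E_x0).
- exfalso; apply (greatest (Finite m)); intros x Ex; exact (E_lb x Ex).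
Qed.

Lemma real_Glb_Rbar_lb x : E x -> real (Glb_Rbar E) <= x.
Proof. exact (proj1 is_glb_Rbar_real x). Qed.

Lemma real_Glb_Rbar_ge M : (forall x, E x -> M <= x) -> M <= real (Glb_Rbar E).
Proof. intros EM; apply (proj2 is_glb_Rbar_real (Finite M)); exact EM. Qed.

Lemma real_Glb_Rbar_approx e : 0 < e -> exists x, E x /\ x < real (Glb_Rbar E) + e.
Proof.
intros he; apply NNPP; intros Hno.
enough (real (Glb_Rbar E) + e <= real (Glb_Rbar E)) by lra.
apply real_Glb_Rbar_ge; intros x Ex.
apply Rnot_lt_le; intros hx; apply Hno; now exists x.
Qed.

End BoundedGlb.

Lemma is_lim_seq_Reps (u : nat -> R) (l : R) :
  is_lim_seq u l <->
  forall e, 0 < e -> exists N, forall n, (N <= n)%nat -> Rabs (u n - l) < e.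
Proof.
rewrite <- is_lim_seq_spec; split.
- intros Hl e he; exact (Hl (mkposreal e he)).
- intros Hl e; exact (Hl e (cond_pos e)).
Qed.

Lemma ucc_any (F : nat -> R -> R) (G : R -> R) K e : ucc F G -> 0 < e ->
  exists N, forall p, (N <= p)%nat -> forall t, 0 <= t <= K -> Rabs (F p t - G t) < e.
Proof.
intros Hu he; destruct (Hu (Rmax K 0) (Rmax_r _ _) e he) as [N HN].
exists N; intros p hp t ht; apply HN; auto.
split; [lra|]; apply Rle_trans with K; [lra | apply Rmax_l].
Qed.

Definition continuous_nonneg (H : R -> R) : Prop :=
  forall t, 0 <= t -> forall eps, 0 < eps -> exists delta, 0 < delta /\
    forall s, 0 <= s -> Rabs (s - t) < delta -> Rabs (H s - H t) < eps.

Lemma Rabs_Rmax0_le x y : Rabs (Rmax 0 y - Rmax 0 x) <= Rabs (y - x).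
Proof. unfold Rmax; destruct (Rle_dec 0 y), (Rle_dec 0 x); split_Rabs; lra. Qed.

Lemma Rabs_Rmin_lt a b c d eps : Rabs (a - c) < eps -> Rabs (b - d) < eps ->
  Rabs (Rmin a b - Rmin c d) < eps.
Proof. unfold Rmin; destruct (Rle_dec a b), (Rle_dec c d); split_Rabs; lra. Qed.

Section ContinuousNonneg.
Variable H : R -> R.
Hypothesis Hc : continuous_nonneg H.

(* Extending [H] by [H 0] on the negative reals makes the compactness results of Stdlib apply. *)
Lemma continuity_Rmax0 : continuity (fun y => H (Rmax 0 y)).
Proof.
intros x eps heps; unfold R_dist; simpl.
destruct (Hc (Rmax 0 x) (Rmax_l _ _) eps heps) as [d [hd Hd]].
exists d; split; [exact hd|]; intros y [_ hy]; apply Hd; [apply Rmax_l|].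
eapply Rle_lt_trans; [apply Rabs_Rmax0_le | exact hy].
Qed.

Lemma continuous_nonneg_max a b : 0 <= a <= b ->
  exists m, a <= m <= b /\ forall x, a <= x <= b -> H x <= H m.
Proof.
intros hab; destruct (continuity_ab_maj (fun y => H (Rmax 0 y)) a b (proj2 hab)
  (fun c _ => continuity_Rmax0 c)) as [m [Hm hm]].
exists m; split; [exact hm|]; intros x hx; specialize (Hm x hx).
now rewrite !Rmax_right in Hm by lra.
Qed.

Lemma continuous_nonneg_min a b : 0 <= a <= b ->
  exists m, a <= m <= b /\ forall x, a <= x <= b -> H m <= H x.
Proof.
intros hab; destruct (continuity_ab_min (fun y => H (Rmax 0 y)) a b (proj2 hab)
  (fun c _ => continuity_Rmax0 c)) as [m [Hm hm]].
exists m; split; [exact hm|]; intros x hx; specialize (Hm x hx).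
now rewrite !Rmax_right in Hm by lra.
Qed.

Lemma lower_bound_margin a b c : 0 <= a -> (forall x, a <= x <= b -> c < H x) ->
  exists d, 0 < d /\ forall x, a <= x <= b -> c + d <= H x.
Proof.
intros ha Hx; destruct (Rle_dec a b) as [hab|hab].
- destruct (continuous_nonneg_min a b (conj ha hab)) as [m [hm Hm]].
  exists (H m - c); split; [specialize (Hx m hm); lra|].
  intros x hx; specialize (Hm x hx); lra.
- exists 1; split; [lra|]; intros; lra.
Qed.

Lemma upper_bound_margin a b c : 0 <= a -> (forall x, a <= x <= b -> H x < c) ->
  exists d, 0 < d /\ forall x, a <= x <= b -> H x <= c - d.
Proof.
intros ha Hx; destruct (Rle_dec a b) as [hab|hab].
- destruct (continuous_nonneg_max a b (conj ha hab)) as [m [hm Hm]].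
  exists (c - H m); split; [specialize (Hx m hm); lra|].
  intros x hx; specialize (Hm x hx); lra.
- exists 1; split; [lra|]; intros; lra.
Qed.

Lemma continuous_nonneg_uniform B eps : 0 < eps -> exists delta, 0 < delta /\
  forall x y, 0 <= x <= B -> 0 <= y <= B -> Rabs (x - y) < delta -> Rabs (H x - H y) < eps.
Proof.
intros heps.
destruct (Heine (fun y => H (Rmax 0 y)) (fun c => 0 <= c <= B) (compact_P3 0 B)
  (fun x _ => continuity_Rmax0 x) (mkposreal eps heps)) as [d Hd]; simpl in Hd.
exists d; split; [apply cond_pos|]; intros x y hx hy hxy.
specialize (Hd x y hx hy hxy).
now rewrite !Rmax_right in Hd by lra.
Qed.

End ContinuousNonneg.

Lemma coding_function_continuous H : coding_function H -> continuous_nonneg H.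
Proof. now intros [Hc _]. Qed.

Section CodingFunction.
Variable H : R -> R.
Hypothesis cH : coding_function H.

Lemma coding_function_argmax : exists m, 0 <= m /\ forall t, 0 <= t -> H t <= H m.
Proof.
destruct cH as [Hc [_ [[M HM] _]]].
destruct (continuous_nonneg_max H Hc 0 (Rmax M 0)) as [m [hm Hm]].
{ split; [lra | apply Rmax_r]. }
exists m; split; [lra|]; intros t ht.
destruct (Rle_dec t (Rmax M 0)) as [htM|htM]; [now apply Hm|].
rewrite HM by (generalize (Rmax_l M 0); lra).
rewrite <- (HM (Rmax M 0)) by apply Rmax_l.
apply Hm; split; [apply Rmax_r | lra].
Qed.

Lemma Gamma_argmax m : 0 <= m -> (forall t, 0 <= t -> H t <= H m) -> Gamma H = H m.
Proof.
intros m0 Hm; set (E := fun y => exists t, 0 <= t /\ y = H t).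
assert (E_m : E (H m)) by now exists m.
assert (E_ub : forall y, E y -> y <= H m) by (intros y [t [ht ->]]; auto).
apply Rle_antisym.
- exact (real_Lub_Rbar_le E (H m) (H m) E_m E_ub (H m) E_ub).
- exact (real_Lub_Rbar_ub E (H m) (H m) E_m E_ub (H m) E_m).
Qed.

Lemma Gamma_ub t : 0 <= t -> H t <= Gamma H.
Proof.
destruct coding_function_argmax as [m [m0 Hm]].
rewrite (Gamma_argmax m m0 Hm); auto.
Qed.

Lemma Gamma_attained : exists m, 0 <= m /\ H m = Gamma H.
Proof.
destruct coding_function_argmax as [m [m0 Hm]].
exists m; split; [exact m0 | symmetry; exact (Gamma_argmax m m0 Hm)].
Qed.

Lemma Gamma_pos : 0 < Gamma H.
Proof.
destruct cH as [_ [Hnn [_ [_ [t [t0 Ht]]]]]].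
generalize (Hnn t t0) (Gamma_ub t t0); intros; destruct (Req_dec (H t) 0); [easy | lra].
Qed.

Lemma zeta_ub t : 0 <= t -> 0 < H t -> t <= zeta H.
Proof.
destruct cH as [_ [_ [[M HM] _]]]; intros t0 Ht.
apply (real_Lub_Rbar_ub _ t (Rmax M 0)); [easy | | easy].
intros x [x0 Hx]; destruct (Rle_dec M x) as [hM|hM].
- rewrite HM in Hx by exact hM; lra.
- generalize (Rmax_l M 0); lra.
Qed.

Lemma zeta_vanish t : zeta H < t -> H t = 0.
Proof.
intros ht; destruct Gamma_attained as [m [m0 Hm]].
assert (m_zeta : m <= zeta H) by (apply zeta_ub; generalize Gamma_pos; lra).
destruct cH as [_ [Hnn _]].
destruct (Rle_lt_or_eq_dec _ _ (Hnn t ltac:(lra))) as [Ht|Ht]; [|easy].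
generalize (zeta_ub t ltac:(lra) Ht); lra.
Qed.

Lemma S_nonneg : 0 <= S H.
Proof.
destruct Gamma_attained as [m [m0 Hm]].
apply (real_Glb_Rbar_ge _ m 0); [now split | now intros x [x0 _] ..].
Qed.

Lemma S_le t : 0 <= t -> H t = Gamma H -> S H <= t.
Proof.
intros t0 Ht; apply (real_Glb_Rbar_lb _ t 0); [now split | now intros x [x0 _] | now split].
Qed.

Lemma S_ge M : (forall t, 0 <= t -> H t = Gamma H -> M <= t) -> M <= S H.
Proof.
intros HM; destruct Gamma_attained as [m [m0 Hm]].
apply (real_Glb_Rbar_ge _ m 0); [now split | now intros x [x0 _] | ].
intros x [x0 Hx]; now apply HM.
Qed.

(* The maximum of [H] is a closed condition, so the infimum of the maximisers is one. *)
Lemma H_S_eq_Gamma : H (S H) = Gamma H.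
Proof.
destruct (Rle_lt_or_eq_dec _ _ (Gamma_ub (S H) S_nonneg)) as [Hlt|]; [exfalso|easy].
destruct (coding_function_continuous H cH (S H) S_nonneg (Gamma H - H (S H)))
  as [d [hd Hd]]; [lra|].
destruct Gamma_attained as [m [m0 Hm]].
destruct (real_Glb_Rbar_approx (fun t => 0 <= t /\ H t = Gamma H) m 0
  (conj m0 Hm) (fun x hx => proj1 hx) d hd) as [x [[x0 Hx] hxd]].
assert (S_x : S H <= x) by now apply S_le.
specialize (Hd x x0 ltac:(rewrite Rabs_right; unfold S in *; lra)).
rewrite Hx, Rabs_right in Hd; lra.
Qed.

End CodingFunction.

Section Excursion.
Variables (H : R -> R) (r : R).
Hypotheses (cH : coding_function H) (r_lt_Gamma : r < Gamma H).

Let sigma_plus_set := fun t => S H <= t /\ H t < Gamma H - r.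
Let sigma_minus_set := fun t => 0 <= t /\ t <= S H /\ H t < Gamma H - r.

Lemma sigma_plus_set_inhabited : exists t, sigma_plus_set t.
Proof.
destruct cH as [_ [_ [[M HM] _]]].
exists (Rmax M (S H)); split; [apply Rmax_r|].
rewrite HM by apply Rmax_l; lra.
Qed.

Lemma S_le_sigma_plus : S H <= sigma_plus r H.
Proof.
destruct sigma_plus_set_inhabited as [t0 ht0].
apply (real_Glb_Rbar_ge sigma_plus_set t0 (S H) ht0); now intros x [hx _].
Qed.

Lemma sigma_plus_le t : S H <= t -> H t < Gamma H - r -> sigma_plus r H <= t.
Proof.
intros ht Ht; apply (real_Glb_Rbar_lb sigma_plus_set t (S H)); [now split | | now split].
now intros x [hx _].
Qed.

Lemma sigma_plus_ge M : (forall t, S H <= t -> H t < Gamma H - r -> M <= t) -> M <= sigma_plus r H.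
Proof.
intros HM; destruct sigma_plus_set_inhabited as [t0 ht0].
apply (real_Glb_Rbar_ge sigma_plus_set t0 (S H) ht0); [now intros x [hx _]|].
intros x [hx Hx]; now apply HM.
Qed.

Lemma sigma_plus_approx e : 0 < e ->
  exists t, S H <= t /\ H t < Gamma H - r /\ t < sigma_plus r H + e.
Proof.
intros he; destruct sigma_plus_set_inhabited as [t0 ht0].
destruct (real_Glb_Rbar_approx sigma_plus_set t0 (S H) ht0 (fun x hx => proj1 hx) e he)
  as [t [[ht Ht] hte]].
now exists t.
Qed.

Lemma H_sigma_plus_le : H (sigma_plus r H) <= Gamma H - r.
Proof.
apply Rnot_lt_le; intros Hlt.
assert (s0 : 0 <= sigma_plus r H) by (generalize S_le_sigma_plus (S_nonneg H cH); lra).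
destruct (coding_function_continuous H cH _ s0 (H (sigma_plus r H) - (Gamma H - r)))
  as [d [hd Hd]]; [lra|].
destruct (sigma_plus_approx d hd) as [x [hx [Hx hxd]]].
assert (sx : sigma_plus r H <= x) by now apply sigma_plus_le.
specialize (Hd x ltac:(lra) ltac:(rewrite Rabs_right; lra)).
apply Rabs_def2 in Hd; lra.
Qed.

Lemma sigma_minus_set_0 : sigma_minus_set 0.
Proof.
destruct cH as [_ [_ [_ [H0 _]]]].
split; [lra|]; split; [apply S_nonneg, cH | rewrite H0; lra].
Qed.

Lemma sigma_minus_nonneg : 0 <= sigma_minus r H.
Proof.
apply (real_Lub_Rbar_ub sigma_minus_set 0 (S H) sigma_minus_set_0);
  [now intros x [_ [hx _]] | exact sigma_minus_set_0].
Qed.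

Lemma sigma_minus_le_S : sigma_minus r H <= S H.
Proof.
apply (real_Lub_Rbar_le sigma_minus_set 0 (S H) sigma_minus_set_0); now intros x [_ [hx _]].
Qed.

Lemma sigma_minus_ge t : 0 <= t <= S H -> H t < Gamma H - r -> t <= sigma_minus r H.
Proof.
intros [t0 tS] Ht; apply (real_Lub_Rbar_ub sigma_minus_set 0 (S H) sigma_minus_set_0);
  [now intros x [_ [hx _]] | now split].
Qed.

Lemma sigma_minus_le M : (forall t, 0 <= t <= S H -> H t < Gamma H - r -> t <= M) ->
  sigma_minus r H <= M.
Proof.
intros HM; apply (real_Lub_Rbar_le sigma_minus_set 0 (S H) sigma_minus_set_0);
  [now intros x [_ [hx _]] |].
intros x [x0 [xS Hx]]; now apply HM.
Qed.

Lemma sigma_minus_approx e : 0 < e ->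
  exists t, 0 <= t <= S H /\ H t < Gamma H - r /\ sigma_minus r H - e < t.
Proof.
intros he; destruct (real_Lub_Rbar_approx sigma_minus_set 0 (S H) sigma_minus_set_0
  (fun x hx => proj1 (proj2 hx)) e he) as [t [[t0 [tS Ht]] hte]].
now exists t.
Qed.

Lemma sigma_minus_lt_S_lt_sigma_plus : 0 < r -> sigma_minus r H < S H < sigma_plus r H.
Proof.
intros hr.
destruct (coding_function_continuous H cH (S H) (S_nonneg H cH) r hr) as [d [hd Hd]].
rewrite (H_S_eq_Gamma H cH) in Hd.
split.
- enough (sigma_minus r H <= S H - d / 2) by lra.
  apply sigma_minus_le; intros t [t0 tS] Ht; apply Rnot_lt_le; intros htd.
  specialize (Hd t t0 ltac:(rewrite Rabs_left1; lra)); apply Rabs_def2 in Hd; lra.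
- enough (S H + d / 2 <= sigma_plus r H) by lra.
  apply sigma_plus_ge; intros t tS Ht; apply Rnot_lt_le; intros htd.
  specialize (Hd t ltac:(generalize (S_nonneg H cH); lra) ltac:(rewrite Rabs_right; lra)).
  apply Rabs_def2 in Hd; lra.
Qed.

Lemma zeta_Theta_le : zeta (Theta r H) <= sigma_plus r H - sigma_minus r H.
Proof.
apply real_Lub_Rbar_le_nonneg.
- intros t [t0 Ht]; apply Rnot_lt_le; intros ht; unfold Theta in Ht.
  rewrite Rmin_right in Ht by lra; generalize H_sigma_plus_le; lra.
- generalize sigma_minus_le_S S_le_sigma_plus; lra.
Qed.

Lemma zeta_Theta_ub t : 0 <= t -> 0 < Theta r H t -> t <= zeta (Theta r H).
Proof.
intros t0 Ht.
apply (real_Lub_Rbar_ub _ t (sigma_plus r H - sigma_minus r H)); [now split | | now split].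
intros x [x0 Hx]; apply Rnot_lt_le; intros hx; unfold Theta in Hx.
rewrite Rmin_right in Hx by lra; generalize H_sigma_plus_le; lra.
Qed.

Section StrictExcursion.
Hypothesis H_gt_on_excursion :
  forall s, sigma_minus r H < s < sigma_plus r H -> H s > Gamma H - r.

Lemma Theta_pos t : 0 < t < sigma_plus r H - sigma_minus r H -> 0 < Theta r H t.
Proof.
intros ht; unfold Theta; rewrite Rmin_left by lra.
generalize (H_gt_on_excursion (sigma_minus r H + t) ltac:(lra)); lra.
Qed.

Lemma zeta_Theta : 0 < r -> zeta (Theta r H) = sigma_plus r H - sigma_minus r H.
Proof.
intros hr; set (D := sigma_plus r H - sigma_minus r H).
assert (hD : 0 < D) by (generalize (sigma_minus_lt_S_lt_sigma_plus hr); unfold D; lra).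
apply Rle_antisym; [exact zeta_Theta_le|].
apply Rnot_lt_le; intros hz.
set (t := (Rmax (zeta (Theta r H)) 0 + D) / 2).
assert (hzD : Rmax (zeta (Theta r H)) 0 < D) by (apply Rmax_lub_lt; lra).
generalize (Rmax_l (zeta (Theta r H)) 0) (Rmax_r (zeta (Theta r H)) 0); intros.
enough (t <= zeta (Theta r H)) by (unfold t in *; lra).
apply zeta_Theta_ub; [unfold t; lra|]; apply Theta_pos; unfold t, D in *; lra.
Qed.

End StrictExcursion.

End Excursion.

Section Convergence.
Variables (H : R -> R) (Hp : nat -> R -> R).
Hypotheses (cH : coding_function H) (cHp : forall p, coding_function (Hp p))
  (Hp_ucc : ucc Hp H) (zeta_lim : is_lim_seq (fun p => zeta (Hp p)) (zeta H)).

Lemma eventually_zeta_lt : exists N, forall p, (N <= p)%nat -> zeta (Hp p) < zeta H + 1.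
Proof.
destruct (proj1 (is_lim_seq_Reps _ _) zeta_lim 1 Rlt_0_1) as [N HN].
exists N; intros p hp; specialize (HN p hp); apply Rabs_def2 in HN; lra.
Qed.

Lemma Gamma_conv : is_lim_seq (fun p => Gamma (Hp p)) (Gamma H).
Proof.
apply is_lim_seq_Reps; intros e he.
destruct eventually_zeta_lt as [N1 HN1].
destruct (ucc_any _ _ (zeta H + 1) (e / 2) Hp_ucc) as [N2 HN2]; [lra|].
destruct (Gamma_attained H cH) as [m [m0 Hm]].
assert (m_zeta : m <= zeta H) by (apply (zeta_ub H cH); generalize (Gamma_pos H cH); lra).
exists (Nat.max N1 N2); intros p hp.
specialize (HN1 p ltac:(lia)); specialize (HN2 p ltac:(lia)).
destruct (Gamma_attained _ (cHp p)) as [mp [mp0 Hmp]].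
assert (upper : Gamma (Hp p) <= Gamma H + e / 2).
{ rewrite <- Hmp; destruct (Rle_dec mp (zeta H + 1)) as [hmp|hmp].
  - generalize (HN2 mp (conj mp0 hmp)) (Gamma_ub H cH mp mp0); intros h; apply Rabs_def2 in h; lra.
  - rewrite (zeta_vanish _ (cHp p)) by lra; generalize (Gamma_pos H cH); lra. }
assert (lower : Gamma H - e / 2 < Gamma (Hp p)).
{ generalize (HN2 m ltac:(lra)) (Gamma_ub _ (cHp p) m m0); intros h; apply Rabs_def2 in h; lra. }
apply Rabs_def1; lra.
Qed.

Section UniqueArgmax.
Hypothesis unique_argmax : forall s, 0 <= s -> H s = Gamma H -> s = S H.

Lemma argmax_localization e : 0 < e -> exists N, forall p, (N <= p)%nat ->
  forall t, 0 <= t -> Hp p t = Gamma (Hp p) -> S H - e < t < S H + e.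
Proof.
intros he; set (Z := zeta H + 1).
assert (below_max : forall x, 0 <= x -> Rabs (x - S H) >= e -> H x < Gamma H).
{ intros x x0 hx; destruct (Rle_lt_or_eq_dec _ _ (Gamma_ub H cH x x0)) as [|Hx]; [easy|].
  rewrite (unique_argmax x x0 Hx), Rminus_diag, Rabs_R0 in hx; lra. }
generalize (S_nonneg H cH); intros S0.
destruct (upper_bound_margin H (coding_function_continuous H cH) 0 (S H - e) (Gamma H))
  as [d1 [hd1 Hd1]]; [lra | intros x hx; apply below_max; [lra | rewrite Rabs_left; lra] |].
destruct (upper_bound_margin H (coding_function_continuous H cH) (S H + e) Z (Gamma H))
  as [d2 [hd2 Hd2]]; [lra | intros x hx; apply below_max; [lra | rewrite Rabs_right; lra] |].
set (d := Rmin d1 d2).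
generalize (Rmin_l d1 d2) (Rmin_r d1 d2) (Rmin_pos d1 d2 hd1 hd2); fold d; intros.
destruct eventually_zeta_lt as [N1 HN1].
destruct (ucc_any _ _ Z (d / 2) Hp_ucc) as [N2 HN2]; [lra|].
destruct (proj1 (is_lim_seq_Reps _ _) Gamma_conv (d / 2)) as [N3 HN3]; [lra|].
exists (Nat.max N1 (Nat.max N2 N3)); intros p hp t t0 Ht.
specialize (HN1 p ltac:(lia)); specialize (HN3 p ltac:(lia)); apply Rabs_def2 in HN3.
destruct (Rle_dec t Z) as [htZ|htZ].
- generalize (HN2 p ltac:(lia) t (conj t0 htZ)); intros h; apply Rabs_def2 in h.
  split; apply Rnot_le_lt; intros ht.
  + specialize (Hd1 t (conj t0 ht)); lra.
  + specialize (Hd2 t (conj ht htZ)); lra.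
- rewrite (zeta_vanish _ (cHp p)) in Ht by (unfold Z in *; lra).
  generalize (Gamma_pos _ (cHp p)); lra.
Qed.

Lemma S_conv : is_lim_seq (fun p => S (Hp p)) (S H).
Proof.
apply is_lim_seq_Reps; intros e he.
destruct (argmax_localization (e / 2)) as [N HN]; [lra|].
exists N; intros p hp.
destruct (Gamma_attained _ (cHp p)) as [m [m0 Hm]].
assert (lower : S H - e / 2 <= S (Hp p)).
{ apply (S_ge _ (cHp p)); intros t t0 Ht; generalize (HN p hp t t0 Ht); lra. }
generalize (S_le _ m m0 Hm) (HN p hp m m0 Hm); intros.
apply Rabs_def1; lra.
Qed.

End UniqueArgmax.

Section Excursions.
Variables (r : R) (rp : nat -> R).
Hypotheses (r_pos : 0 < r) (r_lt_Gamma : r < Gamma H)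
  (rp_lt_Gamma : forall p, rp p < Gamma (Hp p)) (rp_lim : is_lim_seq rp r)
  (S_lim : is_lim_seq (fun p => S (Hp p)) (S H))
  (H_gt_on_excursion : forall s, sigma_minus r H < s < sigma_plus r H -> H s > Gamma H - r).

Lemma eventually_below t : 0 <= t -> H t < Gamma H - r ->
  exists N, forall p, (N <= p)%nat -> Hp p t < Gamma (Hp p) - rp p.
Proof.
intros t0 Ht; set (d := (Gamma H - r - H t) / 3).
destruct (ucc_any _ _ t d Hp_ucc) as [N1 HN1]; [unfold d; lra|].
destruct (proj1 (is_lim_seq_Reps _ _) Gamma_conv d) as [N2 HN2]; [unfold d; lra|].
destruct (proj1 (is_lim_seq_Reps _ _) rp_lim d) as [N3 HN3]; [unfold d; lra|].
exists (Nat.max N1 (Nat.max N2 N3)); intros p hp.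
generalize (HN1 p ltac:(lia) t (conj t0 (Rle_refl t))) (HN2 p ltac:(lia)) (HN3 p ltac:(lia)).
intros h1 h2 h3; apply Rabs_def2 in h1, h2, h3; unfold d in *; lra.
Qed.

Lemma eventually_above a b : 0 <= a -> (forall x, a <= x <= b -> Gamma H - r < H x) ->
  exists N, forall p, (N <= p)%nat -> forall x, a <= x <= b -> Gamma (Hp p) - rp p < Hp p x.
Proof.
intros a0 Hab.
destruct (lower_bound_margin H (coding_function_continuous H cH) a b (Gamma H - r) a0 Hab)
  as [d [hd Hd]].
destruct (ucc_any _ _ b (d / 3) Hp_ucc) as [N1 HN1]; [lra|].
destruct (proj1 (is_lim_seq_Reps _ _) Gamma_conv (d / 3)) as [N2 HN2]; [lra|].
destruct (proj1 (is_lim_seq_Reps _ _) rp_lim (d / 3)) as [N3 HN3]; [lra|].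
exists (Nat.max N1 (Nat.max N2 N3)); intros p hp x hx.
generalize (HN1 p ltac:(lia) x ltac:(lra)) (HN2 p ltac:(lia)) (HN3 p ltac:(lia)) (Hd x hx).
intros h1 h2 h3 h4; apply Rabs_def2 in h1, h2, h3; lra.
Qed.

Lemma sigma_minus_conv : is_lim_seq (fun p => sigma_minus (rp p) (Hp p)) (sigma_minus r H).
Proof.
destruct (sigma_minus_lt_S_lt_sigma_plus H r cH r_lt_Gamma r_pos) as [mS Sp].
apply is_lim_seq_Reps; intros e he; set (eta := (sigma_plus r H - S H) / 2).
destruct (sigma_minus_approx H r cH r_lt_Gamma (e / 2)) as [t [[t0 tS] [Ht hte]]]; [lra|].
assert (tS' : t < S H).
{ destruct (Req_dec t (S H)) as [->|]; [rewrite (H_S_eq_Gamma H cH) in Ht|]; lra. }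
destruct (eventually_above (sigma_minus r H + e / 2) (S H + eta)) as [N1 HN1].
{ generalize (sigma_minus_nonneg H r cH r_lt_Gamma); lra. }
{ intros x hx; apply Rlt_gt, H_gt_on_excursion; unfold eta in *; lra. }
destruct (eventually_below t t0 Ht) as [N2 HN2].
destruct (proj1 (is_lim_seq_Reps _ _) S_lim (Rmin eta (S H - t))) as [N3 HN3].
{ apply Rmin_pos; unfold eta; lra. }
exists (Nat.max N1 (Nat.max N2 N3)); intros p hp.
specialize (HN3 p ltac:(lia)); apply Rabs_def2 in HN3.
generalize (Rmin_l eta (S H - t)) (Rmin_r eta (S H - t)); intros.
assert (upper : sigma_minus (rp p) (Hp p) <= sigma_minus r H + e / 2).
{ apply (sigma_minus_le _ _ (cHp p) (rp_lt_Gamma p)); intros x [x0 xS] Hx.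
  apply Rnot_lt_le; intros hx; generalize (HN1 p ltac:(lia) x ltac:(lra)); lra. }
assert (lower : t <= sigma_minus (rp p) (Hp p)).
{ apply (sigma_minus_ge _ _ (cHp p) (rp_lt_Gamma p)); [lra | exact (HN2 p ltac:(lia))]. }
apply Rabs_def1; lra.
Qed.

Lemma sigma_plus_conv : is_lim_seq (fun p => sigma_plus (rp p) (Hp p)) (sigma_plus r H).
Proof.
destruct (sigma_minus_lt_S_lt_sigma_plus H r cH r_lt_Gamma r_pos) as [mS Sp].
apply is_lim_seq_Reps; intros e he; set (eta := (S H - sigma_minus r H) / 2).
destruct (sigma_plus_approx H r cH r_lt_Gamma (e / 2)) as [t [tS [Ht hte]]]; [lra|].
assert (tS' : S H < t).
{ destruct (Req_dec t (S H)) as [->|]; [rewrite (H_S_eq_Gamma H cH) in Ht|]; lra. }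
destruct (eventually_above (S H - eta) (sigma_plus r H - e / 2)) as [N1 HN1].
{ generalize (sigma_minus_nonneg H r cH r_lt_Gamma); unfold eta; lra. }
{ intros x hx; apply Rlt_gt, H_gt_on_excursion; unfold eta in *; lra. }
destruct (eventually_below t ltac:(generalize (S_nonneg H cH); lra) Ht) as [N2 HN2].
destruct (proj1 (is_lim_seq_Reps _ _) S_lim (Rmin eta (t - S H))) as [N3 HN3].
{ apply Rmin_pos; unfold eta; lra. }
exists (Nat.max N1 (Nat.max N2 N3)); intros p hp.
specialize (HN3 p ltac:(lia)); apply Rabs_def2 in HN3.
generalize (Rmin_l eta (t - S H)) (Rmin_r eta (t - S H)); intros.
assert (lower : sigma_plus r H - e / 2 <= sigma_plus (rp p) (Hp p)).
{ apply (sigma_plus_ge _ _ (cHp p) (rp_lt_Gamma p)); intros x xS Hx.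
  apply Rnot_lt_le; intros hx; generalize (HN1 p ltac:(lia) x ltac:(lra)); lra. }
assert (upper : sigma_plus (rp p) (Hp p) <= t).
{ apply (sigma_plus_le _ _); [lra | exact (HN2 p ltac:(lia))]. }
apply Rabs_def1; lra.
Qed.

Lemma Theta_ucc : ucc (fun p => Theta (rp p) (Hp p)) (Theta r H).
Proof.
intros K _ e he; set (B := sigma_plus r H + 1).
destruct (continuous_nonneg_uniform H (coding_function_continuous H cH) B (e / 4))
  as [dl [hdl Hdl]]; [lra|].
set (dm := Rmin dl 1); generalize (Rmin_l dl 1) (Rmin_r dl 1) (Rmin_pos dl 1 hdl Rlt_0_1).
fold dm; intros.
destruct (proj1 (is_lim_seq_Reps _ _) sigma_minus_conv dm) as [N1 HN1]; [lra|].
destruct (proj1 (is_lim_seq_Reps _ _) sigma_plus_conv dm) as [N2 HN2]; [lra|].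
destruct (ucc_any _ _ B (e / 4) Hp_ucc) as [N3 HN3]; [lra|].
destruct (proj1 (is_lim_seq_Reps _ _) Gamma_conv (e / 4)) as [N4 HN4]; [lra|].
destruct (proj1 (is_lim_seq_Reps _ _) rp_lim (e / 4)) as [N5 HN5]; [lra|].
exists (Nat.max (Nat.max N1 N2) (Nat.max N3 (Nat.max N4 N5))); intros p hp t [t0 _].
generalize (HN1 p ltac:(lia)) (HN2 p ltac:(lia)) (HN4 p ltac:(lia)) (HN5 p ltac:(lia)).
intros h1 h2 h4 h5; apply Rabs_def2 in h1, h2, h4, h5.
generalize (sigma_minus_nonneg H r cH r_lt_Gamma) (S_le_sigma_plus H r cH r_lt_Gamma)
  (S_nonneg H cH) (sigma_minus_nonneg _ _ (cHp p) (rp_lt_Gamma p))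
  (S_le_sigma_plus _ _ (cHp p) (rp_lt_Gamma p)) (S_nonneg _ (cHp p)); intros.
unfold Theta.
set (x := Rmin (sigma_minus r H + t) (sigma_plus r H)).
set (xp := Rmin (sigma_minus (rp p) (Hp p) + t) (sigma_plus (rp p) (Hp p))).
assert (hx : 0 <= x <= B).
{ unfold x, B; split; [apply Rmin_glb; lra|].
  generalize (Rmin_r (sigma_minus r H + t) (sigma_plus r H)); lra. }
assert (hxp : 0 <= xp <= B).
{ unfold xp, B; split; [apply Rmin_glb; lra|].
  generalize (Rmin_r (sigma_minus (rp p) (Hp p) + t) (sigma_plus (rp p) (Hp p))); lra. }
assert (hxxp : Rabs (xp - x) < dl).
{ apply Rabs_Rmin_lt; apply Rabs_def1; lra. }
generalize (Hdl xp x hxp hx hxxp) (HN3 p ltac:(lia) xp hxp); intros h6 h3.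
apply Rabs_def2 in h6, h3; apply Rabs_def1; lra.
Qed.

Lemma zeta_Theta_conv :
  is_lim_seq (fun p => zeta (Theta (rp p) (Hp p))) (zeta (Theta r H)).
Proof.
rewrite (zeta_Theta H r cH r_lt_Gamma H_gt_on_excursion r_pos).
set (D := sigma_plus r H - sigma_minus r H).
assert (hD : 0 < D).
{ generalize (sigma_minus_lt_S_lt_sigma_plus H r cH r_lt_Gamma r_pos); unfold D; lra. }
apply is_lim_seq_Reps; intros e he.
set (t := D - Rmin e D / 2); generalize (Rmin_l e D) (Rmin_r e D) (Rmin_pos e D he hD); intros.
assert (ht : 0 < t < D) by (unfold t; lra).
destruct (ucc_any _ _ t (Theta r H t) Theta_ucc) as [N1 HN1].
{ now apply Theta_pos. }
destruct (proj1 (is_lim_seq_Reps _ _) sigma_minus_conv (e / 2)) as [N2 HN2]; [lra|].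
destruct (proj1 (is_lim_seq_Reps _ _) sigma_plus_conv (e / 2)) as [N3 HN3]; [lra|].
exists (Nat.max N1 (Nat.max N2 N3)); intros p hp.
generalize (HN1 p ltac:(lia) t ltac:(lra)) (HN2 p ltac:(lia)) (HN3 p ltac:(lia)).
intros h1 h2 h3; apply Rabs_def2 in h1, h2, h3.
assert (lower : t <= zeta (Theta (rp p) (Hp p))).
{ apply (zeta_Theta_ub _ _ (cHp p) (rp_lt_Gamma p)); lra. }
generalize (zeta_Theta_le _ _ (cHp p) (rp_lt_Gamma p)); intros upper.
apply Rabs_def1; unfold t, D in *; lra.
Qed.

End Excursions.
End Convergence.

Theorem lemma4p2 (H : R -> R) (Hp : nat -> R -> R) (r : R) (rp : nat -> R) :
  coding_function H ->
  (forall p, coding_function (Hp p)) ->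
  0 < r -> r < Gamma H ->
  (forall p, 0 < rp p /\ rp p < Gamma (Hp p)) ->
  (* (i) *)
  (forall s, (0 <= s /\ H s = Gamma H) <-> s = S H) ->
  (* (ii) *)
  (forall s, sigma_minus r H < s < sigma_plus r H -> H s > Gamma H - r) ->
  (* (iii) *)
  ucc Hp H ->
  is_lim_seq (fun p => zeta (Hp p)) (zeta H) ->
  is_lim_seq rp r ->
  is_lim_seq (fun p => S (Hp p)) (S H) /\
  is_lim_seq (fun p => sigma_minus (rp p) (Hp p)) (sigma_minus r H) /\
  is_lim_seq (fun p => sigma_plus (rp p) (Hp p)) (sigma_plus r H) /\
  ucc (fun p => Theta (rp p) (Hp p)) (Theta r H) /\
  is_lim_seq (fun p => zeta (Theta (rp p) (Hp p))) (zeta (Theta r H)).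
Proof.
intros cH cHp r_pos r_lt_Gamma hrp unique_argmax H_gt Hu zeta_lim rp_lim.
assert (rp_lt_Gamma : forall p, rp p < Gamma (Hp p)) by apply hrp.
assert (S_lim : is_lim_seq (fun p => S (Hp p)) (S H)).
{ apply (S_conv H Hp cH cHp Hu zeta_lim).
  intros s s0 Hs; now apply unique_argmax. }
repeat split; [exact S_lim | eapply sigma_minus_conv | eapply sigma_plus_conv
  | eapply Theta_ucc | eapply zeta_Theta_conv]; eassumption.
Qed.
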